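(* If $f\colon Z\to X$ is a max-min Milyutin map of compact Hausdorff spaces, then $J(f)\colon J(Z)\to J(X)$ is surjective.
   Context: A max-min measure on a compact Hausdorff space $X$ is a functional $\mu\colon C(X)\to\mathbb R$ (not assumed continuous) such that $\mu(c_X)=c$ for constants $c$, $\mu(\varphi\vee\psi)=\mu(\varphi)\vee\mu(\psi)$, and $\mu(c\wedge\varphi)=c\wedge\mu(\varphi)$ for $c\in\mathbb R$. $J(X)$ is the set of max-min measures with the topology of pointwise convergence on $C(X)$; for continuous $f\colon X\to Y$, $J(f)(\mu)(\varphi)=\mu(\varphi\circ f)$. For a closed subset $A\subset X$, $J(A)$ is identified with $J(i)(J(A))\subset J(X)$, $i\colon A\to X$ the inclusion. A continuous surjection $f\colon Z\to X$ is a max-min Milyutin map if there is a continuous $s\colon X\to J(Z)$ with $s(x)\in J(f^{-1}(x))$ for every $x\in X$. *)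

From Stdlib Require Import Reals List.
Open Scope R_scope.
Set Implicit Arguments.

Record is_topology (T : Type) (op : (T -> Prop) -> Prop) : Prop := {
  top_full : op (fun _ => True);
  top_inter : forall U V, op U -> op V -> op (fun x => U x /\ V x);
  top_union : forall (I : Type) (F : I -> T -> Prop),
      (forall i, op (F i)) -> op (fun x => exists i, F i x)
}.

Definition is_compact (T : Type) (op : (T -> Prop) -> Prop) : Prop :=
  forall (I : Type) (F : I -> T -> Prop),
    (forall i, op (F i)) -> (forall x, exists i, F i x) ->
    exists l : list I, forall x, exists i, In i l /\ F i x.

Definition hausdorff (T : Type) (op : (T -> Prop) -> Prop) : Prop :=
  forall x y : T, x <> y -> exists U V, op U /\ op V /\ U x /\ V y /\
    (forall z, U z -> V z -> False).

Definition R_open (U : R -> Prop) : Prop :=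
  forall x, U x -> exists e, 0 < e /\ forall y, Rabs (y - x) < e -> U y.

Definition continuous (S T : Type) (oS : (S -> Prop) -> Prop)
  (oT : (T -> Prop) -> Prop) (f : S -> T) : Prop :=
  forall U, oT U -> oS (fun x => U (f x)).

Definition Cfun (T : Type) (op : (T -> Prop) -> Prop) : Type :=
  { g : T -> R | continuous op R_open g }.

(* Max-min measures (functionals on C(X), not assumed continuous).
   Pointwise max/min of continuous functions are referred to relationally. *)
Definition is_maxmin (T : Type) (op : (T -> Prop) -> Prop)
  (mu : Cfun op -> R) : Prop :=
  (forall (c : R) (g : Cfun op), (forall x, proj1_sig g x = c) -> mu g = c) /\
  (forall g h k : Cfun op,
     (forall x, proj1_sig k x = Rmax (proj1_sig g x) (proj1_sig h x)) ->
     mu k = Rmax (mu g) (mu h)) /\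
  (forall (c : R) (g k : Cfun op),
     (forall x, proj1_sig k x = Rmin c (proj1_sig g x)) ->
     mu k = Rmin c (mu g)).

Definition J (T : Type) (op : (T -> Prop) -> Prop) : Type :=
  { mu : Cfun op -> R | is_maxmin mu }.

(* Topology of pointwise convergence on J(X): the initial topology for the
   evaluations mu |-> mu(phi), phi in C(X) (basic opens = finite intersections). *)
Definition pw_open (T : Type) (op : (T -> Prop) -> Prop) (W : J op -> Prop) : Prop :=
  forall mu : J op, W mu ->
    exists l : list (Cfun op * (R -> Prop)),
      Forall (fun p => R_open (snd p) /\ snd p (proj1_sig mu (fst p))) l /\
      forall nu : J op, Forall (fun p => snd p (proj1_sig nu (fst p))) l -> W nu.

Definition Ccomp (S T : Type) (oS : (S -> Prop) -> Prop) (oT : (T -> Prop) -> Prop)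
  (f : S -> T) (hf : continuous oS oT f) (g : Cfun oT) : Cfun oS :=
  exist (fun h : S -> R => continuous oS R_open h) (fun x => proj1_sig g (f x))
    (fun U hU => hf _ (proj2_sig g U hU)).

Definition sub_open (T : Type) (op : (T -> Prop) -> Prop) (A : T -> Prop)
  (V : {x : T | A x} -> Prop) : Prop :=
  exists U, op U /\ forall y : {x : T | A x}, V y <-> U (proj1_sig y).

Lemma incl_continuous (T : Type) (op : (T -> Prop) -> Prop) (A : T -> Prop) :
  continuous (sub_open op A) op (@proj1_sig T A).
Proof. intros U hU. exists U. split; [exact hU | tauto]. Qed.

Definition fiber (S T : Type) (f : S -> T) (x : T) : S -> Prop := fun z => f z = x.

(* mu in J(Z) lies in J(A) (identified with J(i)(J(A)), i : A -> Z the inclusion). *)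
Definition in_J_sub (T : Type) (op : (T -> Prop) -> Prop) (A : T -> Prop)
  (mu : J op) : Prop :=
  exists nu : J (sub_open op A),
    forall phi : Cfun op,
      proj1_sig mu phi = proj1_sig nu (Ccomp (incl_continuous op A) phi).

Definition maxmin_milyutin (Z X : Type) (oZ : (Z -> Prop) -> Prop)
  (oX : (X -> Prop) -> Prop) (f : Z -> X) : Prop :=
  continuous oZ oX f /\ (forall x, exists z, f z = x) /\
  exists s : X -> J oZ, continuous oX (@pw_open Z oZ) s /\
    forall x, in_J_sub (fiber f x) (s x).

From Stdlib Require Import Reals List.

(* Let s : X -> J(Z) be a continuous max-min Milyutin section of
   f, so s(x) is supported on the fibre f^{-1}(x).  Given nu in J(X), define
   mu(psi) := nu(x |-> s(x)(psi)).  This is well defined because evaluation at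
   psi is continuous on J(Z) for the pointwise topology, and it is a max-min
   measure because each s(x) is and nu is (all three axioms are pointwise).
   Finally, phi o f is constantly phi(x) on the fibre over x, so s(x)(phi o f)
   = phi(x); hence mu(phi o f) = nu(phi), i.e. J(f)(mu) = nu. *)

Section MaxMinMeasures.

Variables (T : Type) (oT : (T -> Prop) -> Prop).

(* A max-min measure only depends on the values of its argument: apply the
   max axiom to g = max(h, h). *)
Lemma maxmin_ext (mu : Cfun oT -> R) (mu_maxmin : is_maxmin mu) (g h : Cfun oT) :
  (forall x, proj1_sig g x = proj1_sig h x) -> mu g = mu h.
Proof.
  destruct mu_maxmin as [_ [mu_max _]]. intros gh.
  rewrite (mu_max h h g).
  - apply Rmax_left, Rle_refl.
  - intros x. rewrite gh. symmetry. apply Rmax_left, Rle_refl.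
Qed.

Lemma in_J_sub_const (A : T -> Prop) (mu : J oT) (mu_A : in_J_sub A mu)
  (g : Cfun oT) (c : R) :
  (forall x, A x -> proj1_sig g x = c) -> proj1_sig mu g = c.
Proof.
  destruct mu_A as [nu nu_mu]. intros g_const.
  rewrite nu_mu.
  destruct (proj2_sig nu) as [nu_const _].
  apply nu_const.
  intros [x Ax]. exact (g_const x Ax).
Qed.

End MaxMinMeasures.

Arguments maxmin_ext {T oT mu} mu_maxmin g h.
Arguments in_J_sub_const {T oT A mu} mu_A g c.

Section Averaging.

Variables (Z X : Type) (oZ : (Z -> Prop) -> Prop) (oX : (X -> Prop) -> Prop).

(* For the pointwise topology, evaluation at psi is continuous on J(Z); hence
   so is x |-> s(x)(psi) for a continuous s : X -> J(Z). *)
Lemma eval_section_continuous (s : X -> J oZ) (psi : Cfun oZ) :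
  continuous oX (@pw_open Z oZ) s ->
  continuous oX R_open (fun x => proj1_sig (s x) psi).
Proof.
  intros s_cont U U_open.
  apply (s_cont (fun m : J oZ => U (proj1_sig m psi))).
  intros m Um. exists ((psi, U) :: nil). split.
  - constructor; [split; assumption | constructor].
  - intros n n_in. inversion n_in as [| p l hp]; subst. exact hp.
Qed.

Definition eval_section (s : X -> J oZ) (s_cont : continuous oX (@pw_open Z oZ) s)
  (psi : Cfun oZ) : Cfun oX :=
  exist (fun h : X -> R => continuous oX R_open h)
    (fun x => proj1_sig (s x) psi) (eval_section_continuous s psi s_cont).

(* Averaging the max-min measures s(x) against a max-min measure nu on X
   yields a max-min measure on Z: every axiom holds pointwise in x and is
   then transported by nu. *)
Lemma average_is_maxmin (s : X -> J oZ) (s_cont : continuous oX (@pw_open Z oZ) s)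
  (nu : J oX) :
  is_maxmin (fun psi => proj1_sig nu (eval_section s s_cont psi)).
Proof.
  destruct (proj2_sig nu) as [nu_const [nu_max nu_min]].
  split; [|split].
  - intros c g g_const. apply nu_const. intros x. simpl.
    destruct (proj2_sig (s x)) as [sx_const _]. exact (sx_const c g g_const).
  - intros g h k k_max. apply nu_max. intros x. simpl.
    destruct (proj2_sig (s x)) as [_ [sx_max _]]. exact (sx_max g h k k_max).
  - intros c g k k_min. apply nu_min. intros x. simpl.
    destruct (proj2_sig (s x)) as [_ [_ sx_min]]. exact (sx_min c g k k_min).
Qed.

Definition average (s : X -> J oZ) (s_cont : continuous oX (@pw_open Z oZ) s)
  (nu : J oX) : J oZ :=
  exist (@is_maxmin Z oZ) _ (average_is_maxmin s s_cont nu).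

End Averaging.

Arguments average {Z X oZ oX} s s_cont nu.

Theorem mainTheorem8 (Z X : Type) (oZ : (Z -> Prop) -> Prop) (oX : (X -> Prop) -> Prop)
  (tZ : is_topology oZ) (cZ : is_compact oZ) (hZ : hausdorff oZ)
  (tX : is_topology oX) (cX : is_compact oX) (hX : hausdorff oX)
  (f : Z -> X) (hf : continuous oZ oX f) (hM : maxmin_milyutin oZ oX f) :
  forall nu : J oX, exists mu : J oZ,
    forall phi : Cfun oX, proj1_sig nu phi = proj1_sig mu (Ccomp hf phi).
Proof.
  intros nu.
  destruct hM as [_ [_ [s [s_cont s_fiber]]]].
  exists (average s s_cont nu).
  intros phi. simpl.
  (* s(x)(phi o f) = phi(x), since phi o f is constant on the fibre over x. *)
  apply (maxmin_ext (proj2_sig nu)).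
  intros x. simpl. symmetry.
  apply (in_J_sub_const (s_fiber x)).
  intros z fz. simpl. unfold fiber in fz. rewrite fz. reflexivity.
Qed.
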